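(* Let $\varphi$ be a quantifier-free first-order formula in the language $\sigma^{bdo}_=$, and let $\varphi^{\circ}$ be the $\sigma^{bdbo}_=$-formula obtained from $\varphi$ by replacing every term of the form $\Diamond t$ by $t\circ 1$. Then $\varphi$ is satisfiable in some bdo if and only if $\varphi^{\circ}$ is satisfiable in some bdbo.
   Context: A bdo is an algebra $\langle A,\wedge,\vee,\Diamond,0,1,\leqslant\rangle$ where $\langle A,\wedge,\vee,0,1\rangle$ is a bounded distributive lattice with natural order $\leqslant$ and $\Diamond$ is unary with $\Diamond0=0$ and $\Diamond(x\vee y)=\Diamond x\vee\Diamond y$; $\sigma^{bdo}_=$ is its language with equality. A bdbo is an algebra $\langle A,\wedge,\vee,\circ,0,1,\leqslant\rangle$ where $\langle A,\wedge,\vee,0,1\rangle$ is a bounded distributive lattice with natural order $\leqslant$ and $\circ$ is binary with $x\circ0=0=0\circ x$, $x\circ(y\vee z)=(x\circ y)\vee(x\circ z)$, $(y\vee z)\circ x=(y\circ x)\vee(z\circ x)$; $\sigma^{bdbo}_=$ is its language with equality. A quantifier-free first-order formula is a Boolean combination of atomic formulas $s=t$, $s\leqslant t$; it is satisfiable in an algebra if true there under some valuation. *)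

(* bounded distributive lattices are mathcomp's
   tbDistrLatticeType (order.v); the natural order is Order.le. *)
From HB Require Import structures.
From mathcomp Require Import all_boot all_order.
Set Implicit Arguments. Unset Strict Implicit. Unset Printing Implicit Defensive.
Import Order.TTheory.
Local Open Scope order_scope.

Inductive tm_bdo : Type :=
| BV : nat -> tm_bdo
| BMeet : tm_bdo -> tm_bdo -> tm_bdo
| BJoin : tm_bdo -> tm_bdo -> tm_bdo
| BDia : tm_bdo -> tm_bdo
| BZero : tm_bdo
| BOne : tm_bdo.

Inductive tm_bdbo : Type :=
| CV : nat -> tm_bdbo
| CMeet : tm_bdbo -> tm_bdbo -> tm_bdbo
| CJoin : tm_bdbo -> tm_bdbo -> tm_bdbo
| CCirc : tm_bdbo -> tm_bdbo -> tm_bdbo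
| CZero : tm_bdbo
| COne : tm_bdbo.

Inductive qf (Tm : Type) : Type :=
| FEq : Tm -> Tm -> qf Tm
| FLe : Tm -> Tm -> qf Tm
| FTrue : qf Tm
| FFalse : qf Tm
| FNot : qf Tm -> qf Tm
| FAnd : qf Tm -> qf Tm -> qf Tm
| FOr : qf Tm -> qf Tm -> qf Tm
| FImp : qf Tm -> qf Tm -> qf Tm.

Definition is_bdo_op (d : Order.disp_t) (T : tbDistrLatticeType d)
  (dia : T -> T) : Prop :=
  dia \bot = \bot /\ (forall x y, dia (x `|` y) = dia x `|` dia y).

Definition is_bdbo_op (d : Order.disp_t) (T : tbDistrLatticeType d)
  (circ : T -> T -> T) : Prop :=
  (forall x, circ x \bot = \bot) /\ (forall x, circ \bot x = \bot) /\
  (forall x y z, circ x (y `|` z) = circ x y `|` circ x z) /\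
  (forall x y z, circ (y `|` z) x = circ y x `|` circ z x).

Fixpoint eval_bdo (d : Order.disp_t) (T : tbDistrLatticeType d)
  (dia : T -> T) (v : nat -> T) (t : tm_bdo) : T :=
  match t with
  | BV n => v n
  | BMeet a b => eval_bdo dia v a `&` eval_bdo dia v b
  | BJoin a b => eval_bdo dia v a `|` eval_bdo dia v b
  | BDia a => dia (eval_bdo dia v a)
  | BZero => \bot
  | BOne => \top
  end.

Fixpoint eval_bdbo (d : Order.disp_t) (T : tbDistrLatticeType d)
  (circ : T -> T -> T) (v : nat -> T) (t : tm_bdbo) : T :=
  match t with
  | CV n => v n
  | CMeet a b => eval_bdbo circ v a `&` eval_bdbo circ v b
  | CJoin a b => eval_bdbo circ v a `|` eval_bdbo circ v b
  | CCirc a b => circ (eval_bdbo circ v a) (eval_bdbo circ v b)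
  | CZero => \bot
  | COne => \top
  end.

Fixpoint holds (Tm : Type) (d : Order.disp_t) (T : tbDistrLatticeType d)
  (ev : Tm -> T) (phi : qf Tm) : Prop :=
  match phi with
  | FEq s t => ev s = ev t
  | FLe s t => ev s <= ev t
  | FTrue => True
  | FFalse => False
  | FNot p => ~ holds ev p
  | FAnd p q => holds ev p /\ holds ev q
  | FOr p q => holds ev p \/ holds ev q
  | FImp p q => holds ev p -> holds ev q
  end.

Fixpoint tr_tm (t : tm_bdo) : tm_bdbo :=
  match t with
  | BV n => CV n
  | BMeet a b => CMeet (tr_tm a) (tr_tm b)
  | BJoin a b => CJoin (tr_tm a) (tr_tm b)
  | BDia a => CCirc (tr_tm a) COne
  | BZero => CZero
  | BOne => COne
  end.

Fixpoint tr_fm (phi : qf tm_bdo) : qf tm_bdbo :=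
  match phi with
  | FEq s t => FEq (tr_tm s) (tr_tm t)
  | FLe s t => FLe (tr_tm s) (tr_tm t)
  | FTrue => FTrue _
  | FFalse => FFalse _
  | FNot p => FNot (tr_fm p)
  | FAnd p q => FAnd (tr_fm p) (tr_fm q)
  | FOr p q => FOr (tr_fm p) (tr_fm q)
  | FImp p q => FImp (tr_fm p) (tr_fm q)
  end.

Definition sat_bdo (phi : qf tm_bdo) : Prop :=
  exists (d : Order.disp_t) (T : tbDistrLatticeType d) (dia : T -> T),
    is_bdo_op dia /\ exists v : nat -> T, holds (eval_bdo dia v) phi.

Definition sat_bdbo (phi : qf tm_bdbo) : Prop :=
  exists (d : Order.disp_t) (T : tbDistrLatticeType d) (circ : T -> T -> T),
    is_bdbo_op circ /\ exists v : nat -> T, holds (eval_bdbo circ v) phi.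

(* A bdbo operator o yields the bdo operator x |-> x o 1.  Conversely a bdo
   operator <> yields the bdbo operator with x o 0 = 0 and x o y = <> x for
   y <> 0, and then x o 1 = <> x.  In both cases <> t and t o 1 evaluate to
   the same element, so one valuation satisfies phi and its translation
   alike. *)
From mathcomp Require Import all_boot all_order.
Import Order.TTheory.
Local Open Scope order_scope.

Section Operators.

Context {d : Order.disp_t} {T : tbDistrLatticeType d}.

Definition circ_of_dia (dia : T -> T) (x y : T) : T :=
  if y == \bot then \bot else dia x.

Lemma bdo_op_circ1 (circ : T -> T -> T) :
  is_bdbo_op circ -> is_bdo_op (fun x => circ x \top).
Proof. by case=> _ [circ0x [_ circDl]]; split=> [|x y]; rewrite ?circ0x ?circDl. Qed.

Lemma bdbo_op_circ_of_dia (dia : T -> T) :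
  is_bdo_op dia -> is_bdbo_op (circ_of_dia dia).
Proof.
rewrite /circ_of_dia; case=> dia0 diaD; split; [|split; [|split]] => x.
- by rewrite eqxx.
- by rewrite dia0; case: ifP.
- move=> y z; rewrite join_eq0.
  by case: (y == \bot); case: (z == \bot); rewrite ?joinxx ?joinx0 ?join0x.
- by move=> y; case: ifP; rewrite ?joinxx ?diaD.
Qed.

(* The case split on [\top == \bot] only matters in the one-element lattice. *)
Lemma circ_of_dia_top {dia : T -> T} :
  dia \bot = \bot -> forall x, circ_of_dia dia x \top = dia x.
Proof.
move=> dia0 x; rewrite /circ_of_dia; case: eqP => // top0.
have /eqP -> : x == \bot by rewrite -lex0 -top0 lex1.
by rewrite dia0.
Qed.

Lemma eval_tr_tm {dia : T -> T} {circ : T -> T -> T} (v : nat -> T) :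
  (forall x, circ x \top = dia x) ->
  forall t, eval_bdo dia v t = eval_bdbo circ v (tr_tm t).
Proof. by move=> circ1 t; elim: t => //= [a -> b ->|a -> b ->|a ->]. Qed.

Lemma holds_tr_fm {ev : tm_bdo -> T} {ev' : tm_bdbo -> T} :
  (forall t, ev t = ev' (tr_tm t)) ->
  forall phi, holds ev phi <-> holds ev' (tr_fm phi).
Proof.
move=> ev_tr; elim=> /=; try tauto; by move=> s t; rewrite !ev_tr.
Qed.

End Operators.

Theorem lemma5p4 (phi : qf tm_bdo) : sat_bdo phi <-> sat_bdbo (tr_fm phi).
Proof.
split.
- move=> [d [T [dia [dia_op [v sat_v]]]]].
  exists d, T, (circ_of_dia dia); split; first exact: bdbo_op_circ_of_dia.
  have circ1 := circ_of_dia_top (proj1 dia_op).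
  by exists v; exact: (holds_tr_fm (eval_tr_tm v circ1) phi).1 sat_v.
- move=> [d [T [circ [circ_op [v sat_v]]]]].
  exists d, T, (fun x => circ x \top); split; first exact: bdo_op_circ1.
  by exists v; exact: (holds_tr_fm (eval_tr_tm v (fun x => erefl)) phi).2 sat_v.
Qed.
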